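(* Let $N=2$ with $r_{11}=1$ and $g\in(-2,2)$. The Finsleroid Indicatrix $\{R\in\mathbb{R}^2: K(g;R)=1\}$ is strongly convex, i.e. it is a closed curve bounding a convex region and its (Euclidean) curvature as a plane curve is strictly positive at every point.
   Context: Here $V_2=\mathbb{R}^2$ with points $R=(R^1,R^2)$, $Z=R^2$, $q(R)=|R^1|$; $h=\sqrt{1-g^2/4}$, $G=g/h$. Define $B(g;R)=Z^2+gqZ+q^2$, $A(g;R)=Z+\frac12 gq$, $\Phi(g;R)=\arctan\big(A/(hq)\big)$ if $q>0$, $\Phi=\pi/2$ if $q=0,Z>0$, $\Phi=-\pi/2$ if $q=0,Z<0$; $J(g;R)=e^{\frac12 G\Phi}$ and the Finsleroid metric function $K(g;R)=\sqrt{B(g;R)}\,J(g;R)$ ($K(g;0)=0$). *)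

From Stdlib Require Import Reals Lra.
From Coquelicot Require Import Coquelicot.
Open Scope R_scope.

(* Points R = (R^1, R^2) of V_2 = R^2 are written as pairs (x, y) : R * R. *)

Definition fh (g : R) : R := sqrt (1 - g ^ 2 / 4).
Definition fG (g : R) : R := g / fh g.
Definition fq (P : R * R) : R := Rabs (fst P).
Definition fZ (P : R * R) : R := snd P.
Definition fB (g : R) (P : R * R) : R :=
  fZ P ^ 2 + g * fq P * fZ P + fq P ^ 2.
Definition fA (g : R) (P : R * R) : R := fZ P + / 2 * g * fq P.
Definition fPhi (g : R) (P : R * R) : R :=
  if Rlt_dec 0 (fq P) then atan (fA g P / (fh g * fq P))
  else if Rlt_dec 0 (fZ P) then PI / 2
  else - (PI / 2).
(* (the value of Phi at the origin is irrelevant, since B(g;0) = 0) *)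
Definition fJ (g : R) (P : R * R) : R := exp (/ 2 * fG g * fPhi g P).
Definition Kfin (g : R) (P : R * R) : R := sqrt (fB g P) * fJ g P.

Definition indicatrix (g : R) (P : R * R) : Prop := Kfin g P = 1.

Definition dist2 (P Q : R * R) : R :=
  sqrt ((fst P - fst Q) ^ 2 + (snd P - snd Q) ^ 2).

Definition convex2 (S : R * R -> Prop) : Prop :=
  forall P Q t, S P -> S Q -> 0 <= t <= 1 ->
    S ((1 - t) * fst P + t * fst Q, (1 - t) * snd P + t * snd Q).

Definition bounded2 (S : R * R -> Prop) : Prop :=
  exists M, forall P, S P -> dist2 P (0, 0) <= M.

Definition boundary2 (S : R * R -> Prop) (P : R * R) : Prop :=
  forall eps, 0 < eps ->
    (exists Q, S Q /\ dist2 P Q < eps) /\ (exists Q, ~ S Q /\ dist2 P Q < eps).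

Definition curvature (x1 y1 x2 y2 : R) : R :=
  (x1 * y2 - y1 * x2) / Rpower (x1 ^ 2 + y1 ^ 2) (3 / 2).

Definition strongly_convex_closed_curve
  (C D : R * R -> Prop) : Prop :=
  convex2 D /\ bounded2 D /\ (forall P, C P <-> boundary2 D P) /\
  exists (T : R) (x y x1 y1 x2 y2 : R -> R),
    0 < T /\
    (forall t, x (t + T) = x t /\ y (t + T) = y t) /\
    (forall t, is_derive x t (x1 t) /\ is_derive y t (y1 t) /\
               is_derive x1 t (x2 t) /\ is_derive y1 t (y2 t) /\
               continuous x2 t /\ continuous y2 t) /\
    (forall s t, 0 <= s < T -> 0 <= t < T -> x s = x t -> y s = y t -> s = t) /\
    (forall P, C P <-> exists t, P = (x t, y t)) /\
    (forall t, 0 < x1 t ^ 2 + y1 t ^ 2) /\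
    (forall t, 0 < curvature (x1 t) (y1 t) (x2 t) (y2 t)).

From Stdlib Require Import Reals Lra Classical.
From Coquelicot Require Import Coquelicot.
Open Scope R_scope.

(* With kappa = G/2 and r = sqrt B, a point has h q = r cos Phi, A = r sin Phi and
   K = r exp (kappa Phi).  The inequality cos d + kappa sin d <= exp (kappa d) for |d| <= PI
   exhibits K as the maximum of a family of linear functionals, so K is sublinear and
   positively homogeneous: {K <= 1} is convex, and since K is comparable with the Euclidean
   norm it is bounded, with boundary {K = 1}.
   On {K = 1} we have r = exp (- kappa Phi), so the half R^1 >= 0 of the indicatrix is the arc
   Phi |-> exp (- kappa Phi) (cos Phi / h, sin Phi - kappa cos Phi), |Phi| <= PI/2, whose
   curvature numerator (1 + kappa^2) exp (- 2 kappa Phi) / h is positive; the other half is its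
   mirror image.  Running Phi along a triangle wave closes the curve, and precomposing with a
   phase whose second derivative at +-PI/2 is 2 kappa cancels the x-acceleration at the two
   junctions on the Z-axis, which makes the closed curve C^2. *)

(** * Polar form of K *)

Definition kappa (g : R) : R := fG g / 2.

Lemma Kfin_polar g P : Kfin g P = sqrt (fB g P) * exp (kappa g * fPhi g P).
Proof. unfold Kfin, fJ, kappa. do 3 f_equal. field. Qed.

Lemma Kfin_nonneg g P : 0 <= Kfin g P.
Proof. rewrite Kfin_polar. apply Rmult_le_pos; [apply sqrt_pos | left; apply exp_pos]. Qed.

Lemma Kfin_abs_fst g x y : Kfin g (Rabs x, y) = Kfin g (x, y).
Proof. unfold Kfin, fB, fJ, fPhi, fA, fq, fZ; cbn. now rewrite Rabs_Rabsolu. Qed.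

Section Polar.
Variable g : R.
Hypothesis hg : -2 < g < 2.

Lemma fh_pos : 0 < fh g.
Proof. apply sqrt_lt_R0. nra. Qed.

Lemma half_g : g / 2 = kappa g * fh g.
Proof. pose proof fh_pos. unfold kappa, fG. field. lra. Qed.

Lemma fB_polar P : fB g P = fA g P ^ 2 + (fh g * fq P) ^ 2.
Proof.
  unfold fB, fA. rewrite Rpow_mult_distr. unfold fh. rewrite pow2_sqrt by nra. field.
Qed.

Lemma fPhi_polar P :
  -(PI/2) <= fPhi g P <= PI/2 /\
  fh g * fq P = sqrt (fB g P) * cos (fPhi g P) /\
  fA g P = sqrt (fB g P) * sin (fPhi g P).
Proof.
  pose proof fh_pos. pose proof PI_RGT_0. rewrite fB_polar. unfold fPhi.
  destruct (Rlt_dec 0 (fq P)) as [Hq | Hq].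
  - set (z := fA g P / (fh g * fq P)).
    assert (Hz : 0 < sqrt (1 + z²)) by (apply sqrt_lt_R0; pose proof (Rle_0_sqr z); lra).
    assert (Hr : sqrt (fA g P ^ 2 + (fh g * fq P) ^ 2) = fh g * fq P * sqrt (1 + z²)).
    { rewrite <- (sqrt_square (fh g * fq P)) at 2 by nra.
      rewrite <- sqrt_mult by (nra || (pose proof (Rle_0_sqr z); lra)).
      f_equal. unfold z, Rsqr. field. lra. }
    pose proof (atan_bound z).
    rewrite Hr, cos_atan, sin_atan. repeat split; try lra.
    + field. lra.
    + unfold z at 2. field. repeat split; lra.
  - assert (Hq0 : fq P = 0) by (pose proof (Rabs_pos (fst P)); unfold fq in *; lra).
    assert (HA : fA g P = fZ P) by (unfold fA; rewrite Hq0; ring).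
    rewrite Hq0, HA, Rmult_0_r, pow_i, Rplus_0_r by auto.
    rewrite <- (Rsqr_pow2 (fZ P)), sqrt_Rsqr_abs.
    destruct (Rlt_dec 0 (fZ P)).
    + rewrite cos_PI2, sin_PI2, Rabs_right by lra. repeat split; lra.
    + rewrite cos_neg, sin_neg, cos_PI2, sin_PI2, Rabs_left1 by lra. repeat split; lra.
Qed.

Lemma fPhi_unique P rho th : 0 < rho -> -(PI/2) <= th <= PI/2 ->
  fh g * fq P = rho * cos th -> fA g P = rho * sin th ->
  sqrt (fB g P) = rho /\ fPhi g P = th.
Proof.
  intros Hrho Hth Hc Hs.
  assert (Er : sqrt (fB g P) = rho).
  { rewrite fB_polar, Hc, Hs.
    replace ((rho * sin th) ^ 2 + (rho * cos th) ^ 2) with (rho * rho)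
      by (transitivity (rho * rho * ((sin th)² + (cos th)²));
          [rewrite sin2_cos2; ring | unfold Rsqr; ring]).
    apply sqrt_square. lra. }
  split; [exact Er |].
  destruct (fPhi_polar P) as [HPhi [_ HA]]. rewrite Er, Hs in HA.
  rewrite <- (asin_sin (fPhi g P)), <- (asin_sin th) by lra. f_equal. nra.
Qed.

End Polar.

Lemma cos_add_mul_sin_le_exp k d : -PI <= d <= PI -> cos d + k * sin d <= exp (k * d).
Proof.
  intros Hd.
  set (f := fun d => exp (- (k * d)) * (cos d + k * sin d)).
  assert (Hf : forall x, is_derive f x (- (1 + k ^ 2) * exp (- (k * x)) * sin x))
    by (intros x; unfold f; auto_derive; [auto | ring]).
  destruct (MVT_gen f 0 d _ (fun x _ => Hf x)) as [c [Hc Hmvt]].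
  { intros x _. apply continuity_pt_filterlim, (ex_derive_continuous f), (ex_intro _ _ (Hf x)). }
  assert (Hsc : 0 <= sin c * d).
  { destruct (Rle_dec 0 d).
    - rewrite Rmin_left, Rmax_right in Hc by lra.
      apply Rmult_le_pos; [apply sin_ge_0 |]; lra.
    - rewrite Rmin_right, Rmax_left in Hc by lra.
      pose proof (sin_ge_0 (- c) ltac:(lra) ltac:(lra)) as Hsin. rewrite sin_neg in Hsin. nra. }
  assert (Hfd : f d <= 1).
  { unfold f in Hmvt at 2. rewrite Rmult_0_r, Ropp_0, exp_0, cos_0, sin_0 in Hmvt.
    pose proof (exp_pos (- (k * c))). pose proof (pow2_ge_0 k).
    assert (0 <= (1 + k ^ 2) * exp (- (k * c)) * (sin c * d))
      by (apply Rmult_le_pos; [apply Rmult_le_pos |]; lra).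
    nra. }
  unfold f in Hfd. rewrite exp_Ropp in Hfd.
  apply (Rmult_le_reg_l (/ exp (k * d))); [apply Rinv_0_lt_compat, exp_pos |].
  rewrite Rinv_l by apply Rgt_not_eq, exp_pos. exact Hfd.
Qed.

(** * Sublinearity of K and the unit ball *)

(* For s the sign of R^1 and a = Phi(R), the line [lin_minorant g s a = 1] supports {K <= 1} at
   R / K(R). *)
Definition lin_minorant (g s a : R) (P : R * R) : R :=
  exp (kappa g * a) *
  (s * fh g * (1 + kappa g ^ 2) * fst P * cos a + snd P * (kappa g * cos a + sin a)).

Lemma lin_minorant_add g s a x1 y1 x2 y2 :
  lin_minorant g s a (x1 + x2, y1 + y2) = lin_minorant g s a (x1, y1) + lin_minorant g s a (x2, y2).
Proof. unfold lin_minorant; cbn. ring. Qed.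

Lemma lin_minorant_scal g s a l x y :
  lin_minorant g s a (l * x, l * y) = l * lin_minorant g s a (x, y).
Proof. unfold lin_minorant; cbn. ring. Qed.

Section Minorant.
Variable g : R.
Hypothesis hg : -2 < g < 2.

Lemma lin_minorant_polar s a P :
  lin_minorant g s a P =
  exp (kappa g * a) *
  ((1 + kappa g ^ 2) * fh g * cos a * (s * fst P - Rabs (fst P)) +
   sqrt (fB g P) * (cos (fPhi g P - a) + kappa g * sin (fPhi g P - a))).
Proof.
  destruct (fPhi_polar g hg P) as [_ [Hq HA]].
  unfold fq in Hq. unfold fA, fZ, fq in HA.
  assert (Hy : snd P = sqrt (fB g P) * sin (fPhi g P) - kappa g * (fh g * Rabs (fst P))).
  { rewrite <- HA. replace (/ 2 * g) with (g / 2) by field. rewrite (half_g g hg). ring. }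
  assert (Hr : sqrt (fB g P) * (cos (fPhi g P - a) + kappa g * sin (fPhi g P - a)) =
    (1 + kappa g ^ 2) * cos a * (fh g * Rabs (fst P)) + snd P * (kappa g * cos a + sin a))
    by (rewrite Hy, cos_minus, sin_minus, Hq; ring).
  rewrite Hr. unfold lin_minorant. ring.
Qed.

Lemma lin_minorant_le_Kfin s a P : s = 1 \/ s = -1 -> -(PI/2) <= a <= PI/2 ->
  lin_minorant g s a P <= Kfin g P.
Proof.
  intros Hs Ha. destruct (fPhi_polar g hg P) as [HPhi _].
  rewrite lin_minorant_polar, Kfin_polar.
  assert (Hsx : s * fst P <= Rabs (fst P)).
  { destruct Hs as [-> | ->];
      [rewrite Rmult_1_l | replace (-1 * fst P) with (- fst P) by ring; rewrite <- Rabs_Ropp];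
      apply Rle_abs. }
  assert (0 <= (1 + kappa g ^ 2) * fh g * cos a).
  { pose proof (fh_pos g hg). pose proof (pow2_ge_0 (kappa g)).
    pose proof (cos_ge_0 a ltac:(lra) ltac:(lra)). apply Rmult_le_pos; nra. }
  pose proof (cos_add_mul_sin_le_exp (kappa g) (fPhi g P - a) ltac:(lra)).
  pose proof (sqrt_pos (fB g P)). pose proof (exp_pos (kappa g * a)).
  replace (kappa g * fPhi g P) with (kappa g * a + kappa g * (fPhi g P - a)) by ring.
  rewrite exp_plus.
  assert (sqrt (fB g P) * (cos (fPhi g P - a) + kappa g * sin (fPhi g P - a))
          <= sqrt (fB g P) * exp (kappa g * (fPhi g P - a))) by (apply Rmult_le_compat_l; lra).
  assert ((1 + kappa g ^ 2) * fh g * cos a * (s * fst P - Rabs (fst P)) <= 0) by nra.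
  nra.
Qed.

Lemma Kfin_lin_minorant_attained P : exists s a, (s = 1 \/ s = -1) /\ -(PI/2) <= a <= PI/2 /\
  lin_minorant g s a P = Kfin g P.
Proof.
  destruct (fPhi_polar g hg P) as [HPhi _].
  exists (if Rle_dec 0 (fst P) then 1 else -1), (fPhi g P).
  split; [destruct Rle_dec; auto | split; [exact HPhi |]].
  rewrite lin_minorant_polar, Kfin_polar, Rminus_diag, cos_0, sin_0.
  replace ((if Rle_dec 0 (fst P) then 1 else -1) * fst P) with (Rabs (fst P)).
  - ring.
  - destruct Rle_dec; [rewrite Rabs_right | rewrite Rabs_left]; lra.
Qed.

Lemma Kfin_subadditive x1 y1 x2 y2 :
  Kfin g (x1 + x2, y1 + y2) <= Kfin g (x1, y1) + Kfin g (x2, y2).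
Proof.
  destruct (Kfin_lin_minorant_attained (x1 + x2, y1 + y2)) as [s [a [Hs [Ha <-]]]].
  rewrite lin_minorant_add.
  pose proof (lin_minorant_le_Kfin s a (x1, y1) Hs Ha).
  pose proof (lin_minorant_le_Kfin s a (x2, y2) Hs Ha). lra.
Qed.

Lemma Kfin_homogeneous l x y : 0 <= l -> Kfin g (l * x, l * y) = l * Kfin g (x, y).
Proof.
  intros Hl. apply Rle_antisym.
  - destruct (Kfin_lin_minorant_attained (l * x, l * y)) as [s [a [Hs [Ha <-]]]].
    rewrite lin_minorant_scal. apply Rmult_le_compat_l, lin_minorant_le_Kfin; auto.
  - destruct (Kfin_lin_minorant_attained (x, y)) as [s [a [Hs [Ha <-]]]].
    rewrite <- lin_minorant_scal. apply lin_minorant_le_Kfin; auto.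
Qed.

End Minorant.

Lemma dist2_le_abs_sum x y : dist2 (x, y) (0, 0) <= Rabs x + Rabs y.
Proof.
  unfold dist2; cbn [fst snd]. rewrite !Rminus_0_r.
  pose proof (Rabs_pos x). pose proof (Rabs_pos y).
  rewrite <- (sqrt_square (Rabs x + Rabs y)) by lra.
  apply sqrt_le_1_alt. rewrite <- (pow2_abs x), <- (pow2_abs y). nra.
Qed.

Lemma abs_sum_le_dist2 P Q :
  Rabs (fst P - fst Q) + Rabs (snd P - snd Q) <= 2 * dist2 P Q.
Proof.
  unfold dist2. destruct (sqrt_plus_sqr (fst P - fst Q) (snd P - snd Q)) as [H _].
  pose proof (Rmax_l (Rabs (fst P - fst Q)) (Rabs (snd P - snd Q))).
  pose proof (Rmax_r (Rabs (fst P - fst Q)) (Rabs (snd P - snd Q))). lra.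
Qed.

Section Norm.
Variable g : R.
Hypothesis hg : -2 < g < 2.

Definition Kfin_l1_bound : R := Kfin g (1, 0) + Kfin g (0, 1) + Kfin g (0, -1).

Lemma Kfin_l1_bound_nonneg : 0 <= Kfin_l1_bound.
Proof.
  unfold Kfin_l1_bound. pose proof (Kfin_nonneg g (1, 0)).
  pose proof (Kfin_nonneg g (0, 1)). pose proof (Kfin_nonneg g (0, -1)). lra.
Qed.

Lemma Kfin_le_l1 x y : Kfin g (x, y) <= Kfin_l1_bound * (Rabs x + Rabs y).
Proof.
  pose proof (Kfin_nonneg g (1, 0)). pose proof (Kfin_nonneg g (0, 1)).
  pose proof (Kfin_nonneg g (0, -1)). pose proof (Rabs_pos x). pose proof (Rabs_pos y).
  assert (Hx : Kfin g (x, 0) = Rabs x * Kfin g (1, 0)).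
  { rewrite <- Kfin_abs_fst, <- Kfin_homogeneous by auto. f_equal. f_equal; ring. }
  assert (Hy : Kfin g (0, y) <= Rabs y * (Kfin g (0, 1) + Kfin g (0, -1))).
  { destruct (Rle_dec 0 y).
    - replace (0, y) with (y * 0, y * 1) by (f_equal; ring).
      rewrite Kfin_homogeneous, Rabs_right by lra. nra.
    - replace (0, y) with (- y * 0, - y * -1) by (f_equal; ring).
      rewrite Kfin_homogeneous, Rabs_left by lra. nra. }
  replace (x, y) with (x + 0, 0 + y) by (f_equal; ring).
  pose proof (Kfin_subadditive g hg x 0 0 y). unfold Kfin_l1_bound. nra.
Qed.

Lemma Kfin_lipschitz P Q : Rabs (Kfin g P - Kfin g Q) <= 2 * Kfin_l1_bound * dist2 P Q.
Proof.
  assert (Hl : forall P Q, Kfin g P - Kfin g Q <= 2 * Kfin_l1_bound * dist2 P Q).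
  { intros [x1 y1] [x2 y2].
    replace (x1, y1) with (x2 + (x1 - x2), y2 + (y1 - y2)) at 1 by (f_equal; ring).
    pose proof (Kfin_subadditive g hg x2 y2 (x1 - x2) (y1 - y2)).
    pose proof (Kfin_le_l1 (x1 - x2) (y1 - y2)).
    pose proof (abs_sum_le_dist2 (x1, y1) (x2, y2)). cbn in *.
    pose proof Kfin_l1_bound_nonneg. nra. }
  apply Rabs_le. pose proof (Hl P Q). pose proof (Hl Q P).
  unfold dist2 in *. replace ((fst Q - fst P) ^ 2 + (snd Q - snd P) ^ 2)
    with ((fst P - fst Q) ^ 2 + (snd P - snd Q) ^ 2) in * by ring. lra.
Qed.

Lemma Kfin_unit_ball_bounded x y : Kfin g (x, y) <= 1 ->
  Rabs x + Rabs y <= exp (Rabs (kappa g) * (PI / 2)) * (/ fh g + 1 + Rabs (kappa g)).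
Proof.
  intros HK. pose proof (fh_pos g hg) as Hh.
  destruct (fPhi_polar g hg (x, y)) as [HPhi [Hq HA]].
  rewrite Kfin_polar in HK. unfold fA, fZ, fq in *; cbn [fst snd] in *.
  pose proof (sqrt_pos (fB g (x, y))) as Hr0.
  set (r := sqrt (fB g (x, y))) in *. set (F := fPhi g (x, y)) in *.
  set (E := exp (Rabs (kappa g) * (PI / 2))).
  pose proof (Rabs_pos (kappa g)) as Hk. pose proof (COS_bound F). pose proof (SIN_bound F).
  assert (Hexp : exp (- (kappa g * F)) <= E).
  { assert (Hm : - (kappa g * F) <= Rabs (kappa g) * (PI / 2)).
    { pose proof (Rle_abs (- (kappa g * F))) as Hle. rewrite Rabs_Ropp, Rabs_mult in Hle.
      assert (Rabs F <= PI / 2) by (apply Rabs_le; lra). nra. }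
    destruct (Rle_lt_or_eq_dec _ _ Hm) as [Hlt | ->]; [left; apply exp_increasing | right]; auto. }
  assert (Hr : r <= E).
  { pose proof (exp_pos (kappa g * F)). pose proof (exp_pos (- (kappa g * F))).
    replace r with (r * exp (kappa g * F) * exp (- (kappa g * F)))
      by (rewrite Rmult_assoc, <- exp_plus, Rplus_opp_r, exp_0; ring).
    nra. }
  assert (Hx : Rabs x <= r / fh g).
  { apply (Rmult_le_reg_l (fh g)); [lra |]. replace (fh g * (r / fh g)) with r by (field; lra).
    nra. }
  assert (Hy : Rabs y <= r + Rabs (kappa g) * r).
  { replace y with (r * sin F - kappa g * (r * cos F)) 
      by (rewrite <- Hq, <- HA; replace (/ 2 * g) with (g / 2) by field;
          rewrite (half_g g hg); ring).
    eapply Rle_trans; [apply Rabs_triang |]. rewrite Rabs_Ropp, !Rabs_mult, (Rabs_pos_eq r) by lra.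
    assert (r * Rabs (sin F) <= r * 1) by (apply Rmult_le_compat_l; [| apply Rabs_le]; lra).
    assert (r * Rabs (cos F) <= r * 1) by (apply Rmult_le_compat_l; [| apply Rabs_le]; lra).
    assert (Rabs (kappa g) * (r * Rabs (cos F)) <= Rabs (kappa g) * (r * 1))
      by (apply Rmult_le_compat_l; lra).
    lra. }
  assert (0 <= / fh g) by (left; apply Rinv_0_lt_compat; lra).
  unfold Rdiv in Hx. nra.
Qed.

Lemma Kfin_sublevel_convex : convex2 (fun P => Kfin g P <= 1).
Proof.
  intros [x1 y1] [x2 y2] t H1 H2 Ht; cbn [fst snd] in *.
  eapply Rle_trans; [apply Kfin_subadditive; exact hg |].
  rewrite !Kfin_homogeneous by (auto; lra). nra.
Qed.

Lemma Kfin_sublevel_bounded : bounded2 (fun P => Kfin g P <= 1).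
Proof.
  eexists. intros [x y] HK.
  eapply Rle_trans; [apply dist2_le_abs_sum | apply Kfin_unit_ball_bounded, HK].
Qed.

Lemma indicatrix_boundary P : Kfin g P = 1 -> boundary2 (fun P => Kfin g P <= 1) P.
Proof.
  intros HK eps Heps. destruct P as [x y]. split.
  - exists (x, y). split; [lra |].
    unfold dist2; cbn [fst snd]. rewrite !Rminus_diag, pow_i, Rplus_0_r, sqrt_0 by auto.
    exact Heps.
  - set (S := dist2 (x, y) (0, 0)). assert (HS : 0 <= S) by apply sqrt_pos.
    set (d := eps / (S + 1)).
    assert (Hd : 0 < d) by (apply Rdiv_lt_0_compat; lra).
    exists ((1 + d) * x, (1 + d) * y). split.
    + rewrite Kfin_homogeneous, HK by (auto; lra). lra.
    + replace (dist2 (x, y) ((1 + d) * x, (1 + d) * y)) with (d * S).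
      * unfold d. apply (Rmult_lt_reg_r (S + 1)); [lra |].
         replace (eps / (S + 1) * S * (S + 1)) with (eps * S) by (field; lra). nra.
      * unfold S, dist2; cbn [fst snd]. rewrite <- (sqrt_square d) at 1 by lra.
         pose proof (pow2_ge_0 (x - 0)). pose proof (pow2_ge_0 (y - 0)).
         rewrite <- sqrt_mult by nra.
         f_equal. ring.
Qed.

Lemma boundary_indicatrix P : boundary2 (fun P => Kfin g P <= 1) P -> Kfin g P = 1.
Proof.
  intros HB. set (L := 2 * Kfin_l1_bound).
  assert (HL : 0 <= L) by (pose proof Kfin_l1_bound_nonneg; unfold L; lra).
  assert (Hclose : forall Q, dist2 P Q < Rabs (Kfin g P - 1) / (L + 1) ->
                   Rabs (Kfin g P - Kfin g Q) < Rabs (Kfin g P - 1)).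
  { intros Q Hd. assert (0 <= dist2 P Q) by apply sqrt_pos.
    set (e := Rabs (Kfin g P - 1) / (L + 1)) in *.
    replace (Rabs (Kfin g P - 1)) with ((L + 1) * e) by (unfold e; field; lra).
    pose proof (Kfin_lipschitz P Q) as Hlip. fold L in Hlip.
    assert (L * dist2 P Q <= L * e) by (apply Rmult_le_compat_l; lra). lra. }
  destruct (Rtotal_order (Kfin g P) 1) as [Hlt | [Heq | Hgt]]; [exfalso | exact Heq | exfalso].
  - destruct (HB (Rabs (Kfin g P - 1) / (L + 1))) as [_ [Q [HQ Hd]]].
    { apply Rdiv_lt_0_compat; [apply Rabs_pos_lt |]; lra. }
    apply Hclose in Hd. rewrite !Rabs_left in Hd by lra. lra.
  - destruct (HB (Rabs (Kfin g P - 1) / (L + 1))) as [[Q [HQ Hd]] _].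
    { apply Rdiv_lt_0_compat; [apply Rabs_pos_lt |]; lra. }
    apply Hclose in Hd. rewrite !Rabs_right in Hd by lra. lra.
Qed.

End Norm.

(** * Gluing along a triangle wave *)

Definition tri (t : R) : R := acos (cos t) - PI / 2.
Definition sgn_sin (t : R) : R := if Rle_dec 0 (sin t) then 1 else -1.

Lemma tri_bound t : -(PI/2) <= tri t <= PI/2.
Proof. unfold tri. pose proof (acos_bound (cos t)). lra. Qed.

Lemma cos_sin_acos_cos t : cos (acos (cos t)) = cos t /\ sin (acos (cos t)) = Rabs (sin t).
Proof.
  pose proof (COS_bound t). split; [apply cos_acos; lra |].
  rewrite sin_acos by lra. symmetry. apply Rtrigo_facts.sin_cos_Rabs.
Qed.

Lemma sin_eq_0_iff_tri_end t : sin t = 0 <-> tri t = PI/2 \/ tri t = -(PI/2).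
Proof.
  destruct (cos_sin_acos_cos t) as [_ Hs]. pose proof (acos_bound (cos t)). unfold tri.
  split.
  - intros H0. rewrite H0, Rabs_R0 in Hs.
    destruct (Rtotal_order (acos (cos t)) 0) as [? | [? | ?]]; [lra | right; lra |].
    destruct (Rtotal_order (acos (cos t)) PI) as [? | [? | ?]]; [| left; lra | lra].
    pose proof (sin_gt_0 (acos (cos t)) ltac:(lra) ltac:(lra)). lra.
  - intros Hend. apply Rabs_eq_0. rewrite <- Hs.
    destruct Hend as [E | E]; [replace (acos (cos t)) with PI by lra; apply sin_PI |
                               replace (acos (cos t)) with 0 by lra; apply sin_0].
Qed.

Lemma tri_shift_up t0 d : 0 <= sin t0 -> 0 <= acos (cos t0) + d <= PI ->
  0 <= sin (t0 + d) /\ tri (t0 + d) = tri t0 + d.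
Proof.
  intros Hs Hd. destruct (cos_sin_acos_cos t0) as [Ca Sa]. rewrite Rabs_right in Sa by lra.
  assert (Hc : cos (t0 + d) = cos (acos (cos t0) + d)) by (rewrite !cos_plus, Ca, Sa; ring).
  assert (Hs' : sin (t0 + d) = sin (acos (cos t0) + d)) by (rewrite !sin_plus, Ca, Sa; ring).
  split; [rewrite Hs'; apply sin_ge_0; lra |].
  unfold tri. rewrite Hc, acos_cos by lra. ring.
Qed.

Lemma tri_shift_down t0 d : sin t0 <= 0 -> 0 <= acos (cos t0) - d <= PI ->
  sin (t0 + d) <= 0 /\ tri (t0 + d) = tri t0 - d.
Proof.
  intros Hs Hd. destruct (cos_sin_acos_cos t0) as [Ca Sa]. rewrite Rabs_left1 in Sa by lra.
  assert (Hc : cos (t0 + d) = cos (acos (cos t0) - d))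
    by (rewrite cos_plus, cos_minus, Ca, Sa; ring).
  assert (Hs' : sin (t0 + d) = - sin (acos (cos t0) - d))
    by (rewrite sin_plus, sin_minus, Ca, Sa; ring).
  split; [rewrite Hs'; pose proof (sin_ge_0 (acos (cos t0) - d)); lra |].
  unfold tri. rewrite Hc, acos_cos by lra. ring.
Qed.

Lemma tri_local_branches t0 : exists delta, 0 < delta /\ forall t, Rabs (t - t0) < delta ->
  (0 <= sin t0 /\ 0 <= sin t /\ tri t = tri t0 + (t - t0)) \/
  (sin t0 <= 0 /\ sin t <= 0 /\ tri t = tri t0 - (t - t0)).
Proof.
  set (a := acos (cos t0)). pose proof (acos_bound (cos t0)) as Ha. fold a in Ha.
  destruct (cos_sin_acos_cos t0) as [_ Sa]. fold a in Sa.
  assert (Hup : forall t, 0 <= sin t0 -> 0 <= a + (t - t0) <= PI ->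
            0 <= sin t /\ tri t = tri t0 + (t - t0))
    by (intros t; pose proof (tri_shift_up t0 (t - t0));
        replace (t0 + (t - t0)) with t in * by ring; auto).
  assert (Hdown : forall t, sin t0 <= 0 -> 0 <= a - (t - t0) <= PI ->
            sin t <= 0 /\ tri t = tri t0 - (t - t0))
    by (intros t; pose proof (tri_shift_down t0 (t - t0));
        replace (t0 + (t - t0)) with t in * by ring; auto).
  destruct (ltac:(lra) : 0 < a < PI \/ a = 0 \/ a = PI) as [Hin | Hend].
  - exists (Rmin a (PI - a)). split; [apply Rmin_glb_lt; lra |].
    intros t Ht. apply Rabs_def2 in Ht.
    pose proof (Rmin_l a (PI - a)). pose proof (Rmin_r a (PI - a)).
    destruct (Rle_dec 0 (sin t0)); [left | right];
      (split; [lra | first [apply Hup | apply Hdown]]); lra.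
  - assert (Hs0 : sin t0 = 0)
      by (apply Rabs_eq_0; rewrite <- Sa; destruct Hend as [-> | ->]; [apply sin_0 | apply sin_PI]).
    exists PI. split; [apply PI_RGT_0 |]. intros t Ht. apply Rabs_def2 in Ht.
    destruct Hend, (Rle_dec 0 (t - t0)); [left | right | right | left];
      (split; [lra | first [apply Hup | apply Hdown]]); lra.
Qed.

Lemma continuous_tri t0 : continuous tri t0.
Proof.
  destruct (tri_local_branches t0) as [delta [Hdelta Hbr]].
  apply continuity_pt_filterlim. intros eps Heps.
  exists (Rmin delta eps). split; [apply Rmin_glb_lt; lra |].
  intros t [_ Ht]. cbn in *. unfold R_dist in *.
  pose proof (Rmin_l delta eps). pose proof (Rmin_r delta eps).
  destruct (Hbr t ltac:(lra)) as [[_ [_ ->]] | [_ [_ ->]]];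
    [replace (tri t0 + (t - t0) - tri t0) with (t - t0) by ring |
     replace (tri t0 - (t - t0) - tri t0) with (- (t - t0)) by ring; rewrite Rabs_Ropp]; lra.
Qed.

Lemma tri_sgn_sin_periodic t : tri (t + 2 * PI) = tri t /\ sgn_sin (t + 2 * PI) = sgn_sin t.
Proof.
  replace (t + 2 * PI) with (t + 2 * INR 1 * PI) by (cbn; ring).
  unfold tri, sgn_sin. now rewrite cos_period, sin_period.
Qed.

Lemma sgn_sin_sqr t : sgn_sin t * sgn_sin t = 1.
Proof. unfold sgn_sin. destruct Rle_dec; ring. Qed.

Lemma tri_right tau : -(PI/2) <= tau <= PI/2 ->
  tri (tau + PI/2) = tau /\ sgn_sin (tau + PI/2) = 1.
Proof.
  intros Htau. unfold tri, sgn_sin. rewrite acos_cos by lra. split; [ring |].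
  destruct Rle_dec as [| Hn]; [reflexivity | exfalso; apply Hn, sin_ge_0; lra].
Qed.

Lemma tri_left tau : -(PI/2) < tau < PI/2 ->
  tri (3 * PI / 2 - tau) = tau /\ sgn_sin (3 * PI / 2 - tau) = -1.
Proof.
  intros Htau. unfold tri, sgn_sin.
  replace (3 * PI / 2 - tau) with (- (tau + PI / 2) + 2 * INR 1 * PI) by (cbn; field).
  rewrite cos_period, sin_period, cos_neg, sin_neg, acos_cos by lra. split; [ring |].
  destruct Rle_dec as [Hs | ]; [| reflexivity].
  pose proof (sin_gt_0 (tau + PI / 2) ltac:(lra) ltac:(lra)). lra.
Qed.

Lemma cos_eq_of_tri_eq s t : tri s = tri t -> cos s = cos t.
Proof.
  intros H. destruct (cos_sin_acos_cos s) as [Cs _]. destruct (cos_sin_acos_cos t) as [Ct _].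
  rewrite <- Cs, <- Ct. unfold tri in H. f_equal. lra.
Qed.

Lemma is_derive_piecewise (f f1 f2 : R -> R) (t0 d delta : R) (P1 P2 : Prop) : 0 < delta ->
  (forall t, Rabs (t - t0) < delta -> (P1 /\ f t = f1 t) \/ (P2 /\ f t = f2 t)) ->
  (P1 -> f1 t0 = f t0 /\ is_derive f1 t0 d) ->
  (P2 -> f2 t0 = f t0 /\ is_derive f2 t0 d) ->
  is_derive f t0 d.
Proof.
  intros Hdelta Hbr H1 H2. apply is_derive_Reals. intros eps Heps.
  assert (Hbranch : forall (P : Prop) fi, (P -> fi t0 = f t0 /\ is_derive fi t0 d) ->
    exists di : posreal, forall h, h <> 0 -> Rabs h < di -> P ->
      Rabs ((fi (t0 + h) - f t0) / h - d) < eps).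
  { intros P fi Hi. destruct (classic P) as [p | np].
    - destruct (Hi p) as [<- Hd]. apply is_derive_Reals in Hd.
      destruct (Hd eps Heps) as [di Hdi]. exists di. auto.
    - exists (mkposreal 1 Rlt_0_1). intros; contradiction. }
  destruct (Hbranch P1 f1 H1) as [d1 Hd1]. destruct (Hbranch P2 f2 H2) as [d2 Hd2].
  assert (Hm : 0 < Rmin delta (Rmin d1 d2))
    by (apply Rmin_glb_lt; [| apply Rmin_glb_lt; apply cond_pos]; lra).
  exists (mkposreal _ Hm). intros h Hh Hhm; cbn in Hhm.
  pose proof (Rmin_l delta (Rmin d1 d2)). pose proof (Rmin_r delta (Rmin d1 d2)).
  pose proof (Rmin_l d1 d2). pose proof (Rmin_r d1 d2).
  destruct (Hbr (t0 + h)) as [[p ->] | [p ->]];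
    [replace (t0 + h - t0) with h by ring; lra | apply Hd1 | apply Hd2]; auto; lra.
Qed.

Lemma is_derive_affine_comp (F F1 : R -> R) (a s t0 : R) : (forall x, is_derive F x (F1 x)) ->
  is_derive (fun t => F (a + s * (t - t0))) t0 (s * F1 a).
Proof.
  intros HF.
  assert (Hlin : is_derive (fun t => a + s * (t - t0)) t0 s) by (auto_derive; [auto | ring]).
  pose proof (is_derive_comp F _ t0 _ _ (HF (a + s * (t0 - t0))) Hlin) as H.
  replace (a + s * (t0 - t0)) with a in H by ring. exact H.
Qed.

Lemma tri_end_vanish (F : R -> R) t : F (PI/2) = 0 -> F (-(PI/2)) = 0 -> sin t = 0 -> F (tri t) = 0.
Proof. intros Htop Hbot Hs. apply sin_eq_0_iff_tri_end in Hs as [-> | ->]; assumption. Qed.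

Lemma continuous_comp_tri (F : R -> R) t0 : (forall x, continuous F x) ->
  continuous (fun t => F (tri t)) t0.
Proof. intros HF. apply (continuous_comp tri F); [apply continuous_tri | apply HF]. Qed.

Section Glue.
Variables F F1 : R -> R.
Hypothesis HF : forall x, is_derive F x (F1 x).

Lemma is_derive_comp_tri t0 : F1 (PI/2) = 0 -> F1 (-(PI/2)) = 0 ->
  is_derive (fun t => F (tri t)) t0 (sgn_sin t0 * F1 (tri t0)).
Proof.
  intros Htop Hbot. destruct (tri_local_branches t0) as [delta [Hdelta Hbr]].
  apply (is_derive_piecewise _ (fun t => F (tri t0 + 1 * (t - t0)))
           (fun t => F (tri t0 + -1 * (t - t0))) t0 _ delta (0 <= sin t0) (sin t0 <= 0) Hdelta).
  - intros t Ht. destruct (Hbr t Ht) as [[Hs0 [_ E]] | [Hs0 [_ E]]];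
      [left | right]; (split; [exact Hs0 | rewrite E; f_equal; ring]).
  - intros Hs0. split; [f_equal; ring |]. unfold sgn_sin. destruct Rle_dec; [| lra].
    apply is_derive_affine_comp, HF.
  - intros Hs0. split; [f_equal; ring |]. unfold sgn_sin. destruct Rle_dec.
    + replace (1 * F1 (tri t0)) with (-1 * F1 (tri t0))
        by (rewrite (tri_end_vanish F1 t0 Htop Hbot) by lra; ring).
      apply is_derive_affine_comp, HF.
    + apply is_derive_affine_comp, HF.
Qed.

Lemma is_derive_sgn_comp_tri t0 : F (PI/2) = 0 -> F (-(PI/2)) = 0 ->
  is_derive (fun t => sgn_sin t * F (tri t)) t0 (F1 (tri t0)).
Proof.
  intros Htop Hbot. destruct (tri_local_branches t0) as [delta [Hdelta Hbr]].
  apply (is_derive_piecewise _ (fun t => F (tri t0 + 1 * (t - t0)))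
           (fun t => -1 * F (tri t0 + -1 * (t - t0))) t0 _ delta
           (0 <= sin t0) (sin t0 <= 0) Hdelta).
  - intros t Ht. destruct (Hbr t Ht) as [[Hs0 [Hs E]] | [Hs0 [Hs E]]].
    + left. split; [exact Hs0 |]. unfold sgn_sin. destruct Rle_dec; [| lra].
      rewrite E, Rmult_1_l. f_equal. ring.
    + right. split; [exact Hs0 |].
      replace (tri t0 + -1 * (t - t0)) with (tri t) by (rewrite E; ring).
      unfold sgn_sin. destruct Rle_dec; [rewrite (tri_end_vanish F t Htop Hbot) by lra |]; ring.
  - intros Hs0. split.
    + unfold sgn_sin. destruct Rle_dec; [| lra].
      replace (tri t0 + 1 * (t0 - t0)) with (tri t0) by ring. ring.
    + rewrite <- (Rmult_1_l (F1 (tri t0))). apply is_derive_affine_comp, HF.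
  - intros Hs0. split.
    + replace (tri t0 + -1 * (t0 - t0)) with (tri t0) by ring.
      unfold sgn_sin. destruct Rle_dec; [rewrite (tri_end_vanish F t0 Htop Hbot) by lra |]; ring.
    + replace (F1 (tri t0)) with (-1 * (-1 * F1 (tri t0))) by ring.
      apply is_derive_scal, is_derive_affine_comp, HF.
Qed.

Lemma continuous_sgn_comp_tri t0 : F (PI/2) = 0 -> F (-(PI/2)) = 0 ->
  continuous (fun t => sgn_sin t * F (tri t)) t0.
Proof.
  intros Htop Hbot. apply (ex_derive_continuous (V := R_NormedModule)).
  eexists. apply is_derive_sgn_comp_tri; assumption.
Qed.

End Glue.

(** * A C^2 parametrization of the indicatrix *)

Lemma is_derive_comp_mul (F F1 p p1 : R -> R) t :
  is_derive F (p t) (F1 (p t)) -> is_derive p t (p1 t) ->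
  is_derive (fun t => F (p t)) t (F1 (p t) * p1 t).
Proof.
  intros HF Hp. rewrite Rmult_comm. exact (is_derive_comp F p t _ _ HF Hp).
Qed.

Lemma is_derive_comp_mul2 (F1 F2 p p1 p2 : R -> R) t :
  is_derive F1 (p t) (F2 (p t)) -> is_derive p t (p1 t) -> is_derive p1 t (p2 t) ->
  is_derive (fun t => F1 (p t) * p1 t) t (F2 (p t) * p1 t ^ 2 + F1 (p t) * p2 t).
Proof.
  intros HF1 Hp Hp1.
  pose proof (is_derive_comp_mul F1 F2 p p1 t HF1 Hp) as HF1p.
  pose proof (is_derive_mult _ _ t _ _ HF1p Hp1 Rmult_comm) as H.
  unfold plus, mult in H; cbn in H.
  replace (F2 (p t) * p1 t ^ 2 + F1 (p t) * p2 t)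
    with (F2 (p t) * p1 t * p1 t + F1 (p t) * p2 t) by ring.
  exact H.
Qed.

Section Arc.
Variables k h : R.
Hypothesis hh : 0 < h.

(* For k = kappa g and h = fh g, (arc_x phi, arc_y phi) is the point of the indicatrix with
   R^1 >= 0 and Phi = phi. *)
Definition arc_x (phi : R) : R := exp (- k * phi) * cos phi / h.
Definition arc_x1 (phi : R) : R := - exp (- k * phi) * (k * cos phi + sin phi) / h.
Definition arc_x2 (phi : R) : R :=
  exp (- k * phi) * ((k ^ 2 - 1) * cos phi + 2 * k * sin phi) / h.
Definition arc_y (phi : R) : R := exp (- k * phi) * (sin phi - k * cos phi).
Definition arc_y1 (phi : R) : R := (1 + k ^ 2) * exp (- k * phi) * cos phi.
Definition arc_y2 (phi : R) : R := - (1 + k ^ 2) * exp (- k * phi) * (k * cos phi + sin phi).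

Lemma is_derive_arc_x phi : is_derive arc_x phi (arc_x1 phi).
Proof. unfold arc_x, arc_x1. auto_derive; [lra | field; lra]. Qed.

Lemma is_derive_arc_x1 phi : is_derive arc_x1 phi (arc_x2 phi).
Proof. unfold arc_x1, arc_x2. auto_derive; [lra | field; lra]. Qed.

Lemma is_derive_arc_y phi : is_derive arc_y phi (arc_y1 phi).
Proof. unfold arc_y, arc_y1. auto_derive; [auto | ring]. Qed.

Lemma is_derive_arc_y1 phi : is_derive arc_y1 phi (arc_y2 phi).
Proof. unfold arc_y1, arc_y2. auto_derive; [auto | ring]. Qed.

Lemma arc_cross phi :
  arc_x1 phi * arc_y2 phi - arc_y1 phi * arc_x2 phi = (1 + k ^ 2) * exp (- k * phi) ^ 2 / h.
Proof.
  unfold arc_x1, arc_y2, arc_y1, arc_x2.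
  transitivity ((1 + k ^ 2) * exp (- k * phi) ^ 2 / h * ((sin phi)² + (cos phi)²)).
  - unfold Rsqr. field. lra.
  - rewrite sin2_cos2. ring.
Qed.

Lemma arc_at_pole e : cos e = 0 ->
  arc_x e = 0 /\ arc_y1 e = 0 /\ arc_x2 e + 2 * k * arc_x1 e = 0.
Proof.
  intros He. unfold arc_x, arc_y1, arc_x2, arc_x1. rewrite He.
  repeat split; [field; lra | ring | field; lra].
Qed.

End Arc.

Section Phase.
Variables (k : R) (n : nat).
Hypothesis hk : Rabs k < INR n.

(* [phase] fixes +-PI/2 with first derivative 1 and second derivative 2 k there (the integer n
   makes the cosine equal to 1 at both poles); n > |k| keeps it increasing. *)
Definition phase (tau : R) : R :=
  tau + k / (2 * INR n ^ 2) * (1 - cos (2 * INR n * (tau + PI / 2))).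
Definition phase1 (tau : R) : R := 1 + k / INR n * sin (2 * INR n * (tau + PI / 2)).
Definition phase2 (tau : R) : R := 2 * k * cos (2 * INR n * (tau + PI / 2)).

Lemma INR_n_pos : 0 < INR n.
Proof. pose proof (Rabs_pos k). lra. Qed.

Lemma is_derive_phase tau : is_derive phase tau (phase1 tau).
Proof. pose proof INR_n_pos. unfold phase, phase1. auto_derive; [auto | field; lra]. Qed.

Lemma is_derive_phase1 tau : is_derive phase1 tau (phase2 tau).
Proof. pose proof INR_n_pos. unfold phase1, phase2. auto_derive; [auto | field; lra]. Qed.

Lemma phase_at_pole e : e = PI/2 \/ e = -(PI/2) -> phase e = e /\ phase1 e = 1 /\ phase2 e = 2 * k.
Proof.
  intros He. pose proof INR_n_pos.
  assert (Hcs : cos (2 * INR n * (e + PI / 2)) = 1 /\ sin (2 * INR n * (e + PI / 2)) = 0).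
  { destruct He as [-> | ->].
    - replace (2 * INR n * (PI / 2 + PI / 2)) with (0 + 2 * INR n * PI) by field.
      rewrite cos_period, sin_period. split; [apply cos_0 | apply sin_0].
    - replace (2 * INR n * (- (PI / 2) + PI / 2)) with 0 by ring.
      split; [apply cos_0 | apply sin_0]. }
  unfold phase, phase1, phase2. destruct Hcs as [-> ->]. repeat split; field; lra.
Qed.

Lemma phase1_pos tau : 0 < phase1 tau.
Proof.
  pose proof INR_n_pos. unfold phase1.
  assert (Hkn : Rabs (k / INR n) < 1).
  { unfold Rdiv. rewrite Rabs_mult, Rabs_inv, (Rabs_pos_eq (INR n)) by lra.
    apply (Rmult_lt_reg_r (INR n)); [lra |]. rewrite Rmult_assoc, Rinv_l; lra. }
  pose proof (Rle_abs (- (k / INR n * sin (2 * INR n * (tau + PI / 2))))) as Habs.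
  rewrite Rabs_Ropp, Rabs_mult in Habs.
  assert (Rabs (sin (2 * INR n * (tau + PI / 2))) <= 1) by (apply Rabs_le, SIN_bound).
  pose proof (Rabs_pos (k / INR n)). nra.
Qed.

Lemma continuity_phase : continuity phase.
Proof.
  intros tau. apply continuity_pt_filterlim, (ex_derive_continuous phase).
  eexists. apply is_derive_phase.
Qed.

Lemma phase_increasing a b : a < b -> phase a < phase b.
Proof.
  intros Hab.
  destruct (MVT_gen phase a b phase1) as [c [_ Hc]].
  - intros x _. apply is_derive_phase.
  - intros x _. apply continuity_phase.
  - pose proof (phase1_pos c). nra.
Qed.

Lemma phase_inj a b : phase a = phase b -> a = b.
Proof.
  intros H. destruct (Rtotal_order a b) as [Hlt | [Heq | Hgt]]; auto;
    [apply phase_increasing in Hlt | apply phase_increasing in Hgt]; lra.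
Qed.

Lemma phase_range tau : -(PI/2) <= tau <= PI/2 -> -(PI/2) <= phase tau <= PI/2.
Proof.
  intros Htau.
  destruct (phase_at_pole (PI/2) ltac:(auto)) as [Htop _].
  destruct (phase_at_pole (-(PI/2)) ltac:(auto)) as [Hbot _].
  split.
  - destruct (Req_dec tau (-(PI/2))) as [-> | Hne]; [lra |].
    rewrite <- Hbot. left. apply phase_increasing. lra.
  - destruct (Req_dec tau (PI/2)) as [-> | Hne]; [lra |].
    rewrite <- Htop. left. apply phase_increasing. lra.
Qed.

End Phase.

Lemma cross_pos_speed_pos x1 y1 x2 y2 : 0 < x1 * y2 - y1 * x2 -> 0 < x1 ^ 2 + y1 ^ 2.
Proof.
  intros H. destruct (Req_dec x1 0) as [-> | Hx]; [destruct (Req_dec y1 0) as [-> | Hy] |].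
  - lra.
  - pose proof (pow2_gt_0 y1 Hy). nra.
  - pose proof (pow2_gt_0 x1 Hx). pose proof (pow2_ge_0 y1). lra.
Qed.

Lemma cross_pos_curvature_pos x1 y1 x2 y2 : 0 < x1 * y2 - y1 * x2 -> 0 < curvature x1 y1 x2 y2.
Proof. intros H. unfold curvature, Rpower. apply Rdiv_lt_0_compat; [exact H | apply exp_pos]. Qed.

Lemma cos_eq_1_small x : Rabs x < 2 * PI -> cos x = 1 -> x = 0.
Proof.
  intros Hx Hc. apply Rabs_def2 in Hx.
  replace x with (2 * (x / 2)) in Hc by field. rewrite cos_2a_sin in Hc.
  assert (Hs : sin (x / 2) = 0) by nra.
  destruct (Rtotal_order x 0) as [Hlt | [Heq | Hgt]]; [exfalso | exact Heq | exfalso].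
  - pose proof (sin_lt_0_var (x / 2) ltac:(lra) ltac:(lra)). lra.
  - pose proof (sin_gt_0 (x / 2) ltac:(lra) ltac:(lra)). lra.
Qed.

Lemma sin_cos_inj s t : 0 <= s < 2 * PI -> 0 <= t < 2 * PI ->
  sin s = sin t -> cos s = cos t -> s = t.
Proof.
  intros Hs Ht Hsin Hcos.
  assert (Hc : cos (s - t) = 1).
  { rewrite cos_minus, Hsin, Hcos. pose proof (sin2_cos2 t). unfold Rsqr in *. lra. }
  apply cos_eq_1_small in Hc; [lra |]. apply Rabs_def1; lra.
Qed.

Section Curve.
Variables (g : R) (n : nat).
Hypothesis hg : -2 < g < 2.
Hypothesis hk : Rabs (kappa g) < INR n.

Local Notation k := (kappa g).
Local Notation h := (fh g).
Local Notation p := (phase k n).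
Local Notation p1 := (phase1 k n).
Local Notation p2 := (phase2 k n).

Let hh : 0 < h := fh_pos g hg.

Definition rx (tau : R) : R := arc_x k h (p tau).
Definition rx1 (tau : R) : R := arc_x1 k h (p tau) * p1 tau.
Definition rx2 (tau : R) : R := arc_x2 k h (p tau) * p1 tau ^ 2 + arc_x1 k h (p tau) * p2 tau.
Definition ry (tau : R) : R := arc_y k (p tau).
Definition ry1 (tau : R) : R := arc_y1 k (p tau) * p1 tau.
Definition ry2 (tau : R) : R := arc_y2 k (p tau) * p1 tau ^ 2 + arc_y1 k (p tau) * p2 tau.

Lemma is_derive_rx tau : is_derive rx tau (rx1 tau).
Proof.
  unfold rx, rx1. apply is_derive_comp_mul; [apply is_derive_arc_x, hh | apply is_derive_phase, hk].
Qed.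

Lemma is_derive_rx1 tau : is_derive rx1 tau (rx2 tau).
Proof.
  unfold rx1, rx2.
  apply is_derive_comp_mul2;
    [apply is_derive_arc_x1, hh | apply is_derive_phase, hk | apply is_derive_phase1, hk].
Qed.

Lemma is_derive_ry tau : is_derive ry tau (ry1 tau).
Proof.
  unfold ry, ry1. apply is_derive_comp_mul; [apply is_derive_arc_y | apply is_derive_phase, hk].
Qed.

Lemma is_derive_ry1 tau : is_derive ry1 tau (ry2 tau).
Proof.
  unfold ry1, ry2.
  apply is_derive_comp_mul2;
    [apply is_derive_arc_y1 | apply is_derive_phase, hk | apply is_derive_phase1, hk].
Qed.

Lemma ex_derive_rx2 tau : ex_derive rx2 tau.
Proof. unfold rx2, arc_x2, arc_x1, phase, phase1, phase2. auto_derive. auto. Qed.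

Lemma ex_derive_ry2 tau : ex_derive ry2 tau.
Proof. unfold ry2, arc_y2, arc_y1, phase, phase1, phase2. auto_derive. auto. Qed.

Lemma reparam_at_pole e : e = PI/2 \/ e = -(PI/2) -> rx e = 0 /\ ry1 e = 0 /\ rx2 e = 0.
Proof.
  intros He. destruct (phase_at_pole k n hk e He) as [Hp [Hp1 Hp2]].
  assert (Hc : cos e = 0)
    by (destruct He as [-> | ->]; [apply cos_PI2 | rewrite cos_neg; apply cos_PI2]).
  destruct (arc_at_pole k h hh e Hc) as [Hx [Hy1 Hx2]].
  unfold rx, ry1, rx2. rewrite Hp, Hp1, Hp2, Hx, Hy1. split; [reflexivity | split; [ring |]].
  rewrite <- Hx2. ring.
Qed.

(* For t in [0, PI] the curve runs up the half R^1 >= 0, for t in [PI, 2 PI] back down its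
   mirror image; the junctions t = 0, PI lie on the Z-axis, where rx, ry1 and rx2 vanish. *)
Definition cx (t : R) : R := sgn_sin t * rx (tri t).
Definition cy (t : R) : R := ry (tri t).
Definition cx1 (t : R) : R := rx1 (tri t).
Definition cy1 (t : R) : R := sgn_sin t * ry1 (tri t).
Definition cx2 (t : R) : R := sgn_sin t * rx2 (tri t).
Definition cy2 (t : R) : R := ry2 (tri t).

Lemma curve_C2 t :
  is_derive cx t (cx1 t) /\ is_derive cy t (cy1 t) /\
  is_derive cx1 t (cx2 t) /\ is_derive cy1 t (cy2 t) /\
  continuous cx2 t /\ continuous cy2 t.
Proof.
  destruct (reparam_at_pole (PI/2) ltac:(auto)) as [Hxt [Hy1t Hx2t]].
  destruct (reparam_at_pole (-(PI/2)) ltac:(auto)) as [Hxb [Hy1b Hx2b]].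
  split; [| split; [| split; [| split; [| split]]]].
  - exact (is_derive_sgn_comp_tri rx rx1 is_derive_rx t Hxt Hxb).
  - exact (is_derive_comp_tri ry ry1 is_derive_ry t Hy1t Hy1b).
  - exact (is_derive_comp_tri rx1 rx2 is_derive_rx1 t Hx2t Hx2b).
  - exact (is_derive_sgn_comp_tri ry1 ry2 is_derive_ry1 t Hy1t Hy1b).
  - refine (continuous_sgn_comp_tri rx2 (Derive rx2) _ t Hx2t Hx2b).
    intros x. apply Derive_correct, ex_derive_rx2.
  - apply continuous_comp_tri. intros x. apply (ex_derive_continuous ry2), ex_derive_ry2.
Qed.

Lemma curve_periodic t : cx (t + 2 * PI) = cx t /\ cy (t + 2 * PI) = cy t.
Proof. unfold cx, cy. destruct (tri_sgn_sin_periodic t) as [-> ->]. auto. Qed.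

Lemma curve_cross_pos t : 0 < cx1 t * cy2 t - cy1 t * cx2 t.
Proof.
  assert (E : cx1 t * cy2 t - cy1 t * cx2 t =
              p1 (tri t) ^ 3 * (arc_x1 k h (p (tri t)) * arc_y2 k (p (tri t)) -
                                arc_y1 k (p (tri t)) * arc_x2 k h (p (tri t)))).
  { unfold cx1, cy2, cy1, cx2.
    replace (sgn_sin t * ry1 (tri t) * (sgn_sin t * rx2 (tri t)))
      with (sgn_sin t * sgn_sin t * (ry1 (tri t) * rx2 (tri t))) by ring.
    rewrite sgn_sin_sqr. unfold rx1, ry2, ry1, rx2. ring. }
  rewrite E, arc_cross by exact hh.
  pose proof (phase1_pos k n hk (tri t)). pose proof hh.
  pose proof (exp_pos (- k * p (tri t))). pose proof (pow2_ge_0 k).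
  apply Rmult_lt_0_compat; [apply pow_lt; lra |].
  apply Rdiv_lt_0_compat; [apply Rmult_lt_0_compat; [lra | apply pow_lt; lra] | lra].
Qed.

Lemma curve_polar t : Kfin g (cx t, cy t) = 1 /\ fPhi g (cx t, cy t) = p (tri t).
Proof.
  pose proof hh as Hh.
  set (phi := p (tri t)).
  assert (Hphi : -(PI/2) <= phi <= PI/2) by (apply phase_range; [exact hk | apply tri_bound]).
  set (E := exp (- k * phi)). assert (HE : 0 < E) by apply exp_pos.
  assert (Hc : 0 <= cos phi) by (apply cos_ge_0; lra).
  assert (Hq : fq (cx t, cy t) = E * cos phi / h).
  { unfold fq, cx, rx, arc_x; cbn [fst]. fold phi E.
    assert (0 <= / h) by (left; apply Rinv_0_lt_compat, hh).
    rewrite Rabs_mult, (Rabs_pos_eq (E * cos phi / h)) by (apply Rmult_le_pos; nra).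
    unfold sgn_sin. destruct Rle_dec; [rewrite Rabs_R1 | rewrite Rabs_m1]; ring. }
  destruct (fPhi_unique g hg (cx t, cy t) E phi HE Hphi) as [Er Ep].
  - rewrite Hq. field. lra.
  - unfold fA. rewrite Hq. unfold fZ, cy, ry, arc_y; cbn [snd]. fold phi E.
    replace (/ 2 * g) with (k * h) by (rewrite <- (half_g g hg); field). field. lra.
  - split; [| exact Ep]. rewrite Kfin_polar, Er, Ep. unfold E.
    rewrite <- exp_plus. replace (- k * phi + k * phi) with 0 by ring. apply exp_0.
Qed.

Lemma rx_eq_0 tau : -(PI/2) <= tau <= PI/2 -> rx tau = 0 -> tau = PI/2 \/ tau = -(PI/2).
Proof.
  intros Htau Hx. pose proof hh.
  destruct (phase_at_pole k n hk (PI/2) ltac:(auto)) as [Htop _].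
  destruct (phase_at_pole k n hk (-(PI/2)) ltac:(auto)) as [Hbot _].
  pose proof (phase_range k n hk tau Htau).
  assert (Hc : cos (p tau) = 0).
  { unfold rx, arc_x in Hx. pose proof (exp_pos (- k * p tau)).
    replace (cos (p tau)) with (exp (- k * p tau) * cos (p tau) / h * (h / exp (- k * p tau)))
      by (field; split; lra).
    rewrite Hx. ring. }
  destruct (Req_dec (p tau) (PI/2)) as [E | E];
    [left; apply (phase_inj k n hk); congruence |].
  destruct (Req_dec (p tau) (-(PI/2))) as [E' | E'];
    [right; apply (phase_inj k n hk); congruence |].
  pose proof (cos_gt_0 (p tau) ltac:(lra) ltac:(lra)). lra.
Qed.

Lemma curve_inj s t : 0 <= s < 2 * PI -> 0 <= t < 2 * PI ->
  cx s = cx t -> cy s = cy t -> s = t.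
Proof.
  intros Hs Ht Ex Ey.
  assert (Htri : tri s = tri t).
  { destruct (curve_polar s) as [_ Ps]. destruct (curve_polar t) as [_ Pt].
    rewrite Ex, Ey, Pt in Ps. symmetry. exact (phase_inj k n hk _ _ Ps). }
  assert (Hcos : cos s = cos t) by (apply cos_eq_of_tri_eq, Htri).
  apply sin_cos_inj; auto.
  destruct (Req_dec (sin s) (sin t)) as [| Hne]; [assumption | exfalso].
  assert (Hopp : sin s = - sin t).
  { pose proof (sin2_cos2 s). pose proof (sin2_cos2 t). rewrite Hcos in *. unfold Rsqr in *.
    assert (Hprod : (sin s - sin t) * (sin s + sin t) = 0) by nra.
    apply Rmult_integral in Hprod as [? | ?]; [exfalso; apply Hne |]; lra. }
  assert (Ht0 : sin t <> 0) by (intro; apply Hne; lra).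
  assert (Hx0 : rx (tri t) = 0).
  { unfold cx in Ex. rewrite Htri in Ex. unfold sgn_sin in Ex.
    destruct (Rle_dec 0 (sin s)), (Rle_dec 0 (sin t)); try (exfalso; lra); lra. }
  apply Ht0, sin_eq_0_iff_tri_end, rx_eq_0; [apply tri_bound | exact Hx0].
Qed.

Lemma curve_onto P : Kfin g P = 1 -> exists t, P = (cx t, cy t).
Proof.
  intros HK. pose proof hh as Hh. pose proof PI_RGT_0.
  destruct (fPhi_polar g hg P) as [HPhi [Hq HA]].
  destruct (phase_at_pole k n hk (PI/2) ltac:(auto)) as [Htop _].
  destruct (phase_at_pole k n hk (-(PI/2)) ltac:(auto)) as [Hbot _].
  destruct (IVT_gen p (-(PI/2)) (PI/2) (fPhi g P) (continuity_phase k n hk)) as [tau [Htau Hp]].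
  { rewrite Htop, Hbot, Rmin_left, Rmax_right by lra. exact HPhi. }
  rewrite Rmin_left, Rmax_right in Htau by lra.
  rewrite Kfin_polar in HK.
  set (r := sqrt (fB g P)) in *. set (F := fPhi g P) in *.
  assert (Hr : r = exp (- k * F)).
  { apply (Rmult_eq_reg_r (exp (k * F))); [| apply Rgt_not_eq, exp_pos].
    rewrite HK, <- exp_plus. replace (- k * F + k * F) with 0 by ring. now rewrite exp_0. }
  assert (HX : rx tau = fq P).
  { unfold rx, arc_x. rewrite Hp. fold F. rewrite <- Hr.
    apply (Rmult_eq_reg_l h); [rewrite Hq; field |]; lra. }
  assert (HY : ry tau = fZ P).
  { unfold ry, arc_y. rewrite Hp. fold F. rewrite <- Hr.
    replace (r * (sin F - k * cos F)) with (r * sin F - k * (r * cos F)) by ring.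
    rewrite <- HA, <- Hq. unfold fA. replace (/ 2 * g) with (g / 2) by field.
    rewrite (half_g g hg). ring. }
  destruct P as [x y]. unfold fq, fZ in *; cbn [fst snd] in *.
  destruct (Rle_dec 0 x) as [Hx | Hx].
  - exists (tau + PI/2). destruct (tri_right tau Htau) as [Ht Hs].
    unfold cx, cy. rewrite Ht, Hs, HX, HY, Rabs_right by lra. f_equal. ring.
  - assert (Hin : -(PI/2) < tau < PI/2).
    { assert (Hpos : 0 < rx tau) by (rewrite HX; apply Rabs_pos_lt; lra).
      destruct (reparam_at_pole (PI/2) ltac:(auto)) as [Hxt _].
      destruct (reparam_at_pole (-(PI/2)) ltac:(auto)) as [Hxb _].
      assert (tau <> PI/2) by (intros ->; lra). assert (tau <> -(PI/2)) by (intros ->; lra).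
      lra. }
    exists (3 * PI / 2 - tau). destruct (tri_left tau Hin) as [Ht Hs].
    unfold cx, cy. rewrite Ht, Hs, HX, HY, Rabs_left by lra. f_equal. ring.
Qed.

End Curve.

Theorem theorem1p2 (g : R) (hg : -2 < g < 2) :
  strongly_convex_closed_curve (indicatrix g) (fun P => Kfin g P <= 1).
Proof.
  split; [exact (Kfin_sublevel_convex g hg) |].
  split; [exact (Kfin_sublevel_bounded g hg) |].
  split; [intros P; split; [apply indicatrix_boundary | apply boundary_indicatrix]; exact hg |].
  destruct (INR_unbounded (Rabs (kappa g))) as [n hk].
  exists (2 * PI), (cx g n), (cy g n), (cx1 g n), (cy1 g n), (cx2 g n), (cy2 g n).
  split; [pose proof PI_RGT_0; lra |].
  split; [exact (curve_periodic g n) |].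
  split; [exact (curve_C2 g n hg hk) |].
  split; [exact (curve_inj g n hg hk) |].
  split; [intros P; split; [apply (curve_onto g n hg hk) |
                            intros [t ->]; apply (curve_polar g n hg hk)] |].
  split; intros t; pose proof (curve_cross_pos g n hg hk t).
  - eapply cross_pos_speed_pos; eassumption.
  - apply cross_pos_curvature_pos; assumption.
Qed.
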